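(* Let $A$ be a real symmetric $n\times n$ matrix with smallest eigenvalue $\bar\lambda$, let $a,x_0,b_2,\dots,b_m\in\mathbb{R}^n$, $\alpha>0$, $\beta_2,\dots,\beta_m\in\mathbb{R}$, and define $f(x)=x^TAx+a^Tx$, $h_1(x)=\|x-x_0\|^2-\alpha$, $h_i(x)=b_i^Tx-\beta_i$ for $i=2,\dots,m$. Assume (H4) the system $Av-\bar\lambda v=0$, $b_i^Tv=0$ ($i=2,\dots,m$) has a nonzero solution $v\in\mathbb{R}^n$. Then the system $Av-\bar\lambda v=0$, $(a+2\bar\lambda x_0)^Tv\le 0$, $b_i^Tv\le 0$ ($i=2,\dots,m$) has a nonzero solution, and the set $\mathrm{U}(f,h_1,\dots,h_m)$ is convex.
   Context: $\mathrm{U}(f,h_1,\dots,h_m):=\{(f(x),h_1(x),\dots,h_m(x)) : x\in\mathbb{R}^n\}+\mathbb{R}^{m+1}_+\subset\mathbb{R}^{m+1}$. *)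

From HB Require Import structures.
From mathcomp Require Import all_boot all_order all_algebra.
From mathcomp Require Import reals.
Set Implicit Arguments. Unset Strict Implicit. Unset Printing Implicit Defensive.
Import Order.TTheory GRing.Theory Num.Theory.
Local Open Scope ring_scope.

Section Defs.
Variable R : realType.

Definition smallest_eigenvalue (n : nat) (A : 'M[R]_n) (lam : R) : Prop :=
  eigenvalue A lam /\ (forall mu : R, eigenvalue A mu -> lam <= mu).

Definition qobj (n : nat) (A : 'M[R]_n) (a x : 'cV[R]_n) : R :=
  (x^T *m A *m x) 0 0 + (a^T *m x) 0 0.

Definition ballcon (n : nat) (x0 : 'cV[R]_n) (alpha : R) (x : 'cV[R]_n) : R :=
  \sum_(j < n) ((x - x0) j 0) ^+ 2 - alpha.

Definition lincon (n : nat) (b : 'cV[R]_n) (beta : R) (x : 'cV[R]_n) : R :=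
  (b^T *m x) 0 0 - beta.

(* The vector (f(x), h_1(x), h_2(x), ..., h_m(x)) in R^{2+k}, k = m - 1;
   the linear constraints h_2..h_m are indexed by 'I_k. *)
Definition value_vec (n k : nat) (A : 'M[R]_n) (a x0 : 'cV[R]_n) (alpha : R)
  (b : 'I_k -> 'cV[R]_n) (beta : 'I_k -> R) (x : 'cV[R]_n) : 'rV[R]_(2 + k) :=
  \row_(i < 2 + k)
    match split i with
    | inl j => if (j : nat) == 0%N then qobj A a x else ballcon x0 alpha x
    | inr j => lincon (b j) (beta j) x
    end.

(* U(f, h_1, ..., h_m) = {(f(x), h_1(x), ..., h_m(x)) : x in R^n} + R^{m+1}_+ *)
Definition Uset (n k : nat) (A : 'M[R]_n) (a x0 : 'cV[R]_n) (alpha : R)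
  (b : 'I_k -> 'cV[R]_n) (beta : 'I_k -> R) (y : 'rV[R]_(2 + k)) : Prop :=
  exists x : 'cV[R]_n, forall i, value_vec A a x0 alpha b beta x 0 i <= y 0 i.

Definition convex_set (p : nat) (S : 'rV[R]_p -> Prop) : Prop :=
  forall y z, S y -> S z -> forall t : R, 0 <= t -> t <= 1 ->
    S (t *: y + (1 - t) *: z).

End Defs.

(* Write c := a + 2 lam x0 and B := A - lam I.  Since lam is the least
   eigenvalue of the symmetric matrix A, B is positive semidefinite (a minimiser
   of x^T A x on the unit sphere is an eigenvector), and
     f(x) = x^T B x + c^T x + lam ||x - x0||^2 - lam ||x0||^2.
   Flipping the sign of the vector given by (H4) if necessary, we get an
   eigenvector v of lam with c^T v <= 0 and b_i^T v = 0.  Given x, w and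
   t in [0, 1], move from u0 = t x + (1 - t) w along v by the step s >= 0 for
   which ||u - x0||^2 = t ||x - x0||^2 + (1 - t) ||w - x0||^2.  Since B v = 0 the
   step leaves x^T B x and the linear constraints unchanged and does not
   increase c^T x; hence every component of (f, h_1, ..., h_m) at u is at most
   the corresponding convex combination of its values at x and w. *)

From HB Require Import structures.
From mathcomp Require Import all_boot all_order all_algebra.
From mathcomp Require Import reals ring lra.
From mathcomp Require Import boolp classical_sets topology normedtype derive.
Set Implicit Arguments. Unset Strict Implicit. Unset Printing Implicit Defensive.
Import Order.TTheory GRing.Theory Num.Theory.
Import numFieldNormedType.Exports.
Local Open Scope ring_scope.

Section Forms.
Variables (R : comNzRingType) (n : nat).
Implicit Types (A B : 'M[R]_n) (u v w x : 'cV[R]_n).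

Definition vdot u v : R := (u^T *m v) 0 0.
Definition qform A x : R := vdot x (A *m x).
Definition sqnorm x : R := vdot x x.

Lemma vdotC u v : vdot u v = vdot v u.
Proof.
have -> : vdot u v = ((u^T *m v)^T) 0 0 by rewrite [RHS]mxE.
by rewrite trmx_mul trmxK.
Qed.

Lemma vdotDr u v w : vdot u (v + w) = vdot u v + vdot u w.
Proof. by rewrite /vdot mulmxDr mxE. Qed.

Lemma vdotDl u v w : vdot (u + v) w = vdot u w + vdot v w.
Proof. by rewrite vdotC vdotDr !(vdotC w). Qed.

Lemma vdotZr s u v : vdot u (s *: v) = s * vdot u v.
Proof. by rewrite /vdot -scalemxAr mxE. Qed.

Lemma vdotNr u v : vdot u (- v) = - vdot u v.
Proof. by rewrite -scaleN1r vdotZr mulN1r. Qed.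

Lemma vdotZl s u v : vdot (s *: u) v = s * vdot u v.
Proof. by rewrite vdotC vdotZr vdotC. Qed.

Lemma vdot_mulmxr A u v : vdot u (A *m v) = vdot (A^T *m u) v.
Proof. by rewrite /vdot trmx_mul trmxK mulmxA. Qed.

Lemma vdot_sym A u v : A^T = A -> vdot u (A *m v) = vdot v (A *m u).
Proof. by move=> sA; rewrite vdot_mulmxr sA vdotC. Qed.

Lemma qformE A x : qform A x = \sum_i \sum_j x i 0 * A i j * x j 0.
Proof.
rewrite /qform /vdot mxE; apply: eq_bigr => i _; rewrite !mxE big_distrr /=.
by apply: eq_bigr => j _; rewrite mulrA.
Qed.

Lemma qformD A u v :
  qform A (u + v) = qform A u + (vdot u (A *m v) + vdot v (A *m u)) + qform A v.
Proof. by rewrite /qform mulmxDr !vdotDl !vdotDr; ring. Qed.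

Lemma qformZ A s x : qform A (s *: x) = s ^+ 2 * qform A x.
Proof. by rewrite /qform -scalemxAr vdotZl vdotZr mulrA -expr2. Qed.

Lemma sqnormZ s x : sqnorm (s *: x) = s ^+ 2 * sqnorm x.
Proof. by rewrite /sqnorm vdotZl vdotZr mulrA -expr2. Qed.

Lemma qform0 A : qform A 0 = 0.
Proof. by rewrite /qform /vdot !mulmx0 mxE. Qed.

Lemma qform1 x : qform 1%:M x = sqnorm x.
Proof. by rewrite /qform mul1mx. Qed.

Lemma sqnorm0 : sqnorm 0 = 0.
Proof. by rewrite -qform1 qform0. Qed.

Lemma sqnormD_scale x v s :
  sqnorm (x + s *: v) = sqnorm x + s * (2 * vdot x v) + s ^+ 2 * sqnorm v.
Proof. by rewrite /sqnorm !vdotDl !vdotDr !vdotZl !vdotZr (vdotC v x); ring. Qed.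

Lemma sqnormB x y : sqnorm (x - y) = sqnorm x - 2 * vdot x y + sqnorm y.
Proof. by rewrite -scaleN1r sqnormD_scale; ring. Qed.

Lemma qform_sub_scalar A s x : qform (A - s%:M) x = qform A x - s * sqnorm x.
Proof. by rewrite /qform mulmxBl mul_scalar_mx -scaleNr vdotDr vdotZr mulNr. Qed.

Lemma qform_convex_comb A x w t :
  qform A (t *: x + (1 - t) *: w) =
  t * qform A x + (1 - t) * qform A w - t * (1 - t) * qform A (x - w).
Proof.
have -> : t *: x + (1 - t) *: w = w + t *: (x - w).
  by apply/matrixP => i j; rewrite !mxE; ring.
rewrite {2}(_ : x = w + (x - w)); last by rewrite addrC subrK.
rewrite (qformD _ w (t *: _)) (qformD _ w (x - w)) qformZ -scalemxAr vdotZl vdotZr.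
ring.
Qed.

Lemma qform_add_ker A u v : A^T = A -> A *m v = 0 -> qform A (u + v) = qform A u.
Proof.
move=> sA Av0; rewrite qformD {2}/qform (vdot_sym v u sA) Av0.
by rewrite /vdot !mulmx0 mxE !addr0.
Qed.

End Forms.

Section Semidefinite.
Variables (R : realFieldType) (n : nat).
Implicit Types (A : 'M[R]_n) (c w x y : 'cV[R]_n).

Definition psdmx A : Prop := forall x, 0 <= qform A x.

Lemma sqnormE x : sqnorm x = \sum_i x i 0 ^+ 2.
Proof. by rewrite /sqnorm /vdot mxE; apply: eq_bigr => i _; rewrite mxE. Qed.

Lemma sqnorm_ge0 x : 0 <= sqnorm x.
Proof. by rewrite sqnormE sumr_ge0 // => i _; rewrite sqr_ge0. Qed.

Lemma sqnorm_eq0 x : sqnorm x = 0 -> x = 0.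
Proof.
rewrite sqnormE => /psumr_eq0P x0; apply/matrixP => i j; rewrite ord1 mxE.
by apply/eqP; rewrite -sqrf_eq0; apply/eqP/x0 => // k _; rewrite sqr_ge0.
Qed.

Lemma sqnorm_gt0 x : x != 0 -> 0 < sqnorm x.
Proof.
by move=> x0; rewrite lt_def sqnorm_ge0 andbT; apply: contra x0 => /eqP /sqnorm_eq0 ->.
Qed.

Lemma psdmx_qform_convex A x w t : psdmx A -> 0 <= t <= 1 ->
  qform A (t *: x + (1 - t) *: w) <= t * qform A x + (1 - t) * qform A w.
Proof.
move=> psdA /andP[t0 t1]; rewrite qform_convex_comb lerBlDr lerDl.
by rewrite !mulr_ge0 // subr_ge0.
Qed.

Lemma quadratic_ge0_lincoef_eq0 (p q : R) :
  (forall s, 0 <= s * p + s ^+ 2 * q) -> p = 0.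
Proof.
move=> ge0; apply/eqP; apply: contraT => p0.
pose e := (`|q| + 1)^-1.
have q1_gt0 : 0 < `|q| + 1 by rewrite ltr_wpDl.
have e_gt0 : 0 < e by rewrite invr_gt0.
have eq_lt1 : e * q < 1.
  rewrite -(mulVf (lt0r_neq0 q1_gt0)) -/e.
  apply: le_lt_trans (ler_wpM2l (ltW e_gt0) (ler_norm q)) _.
  by rewrite ltr_pM2l // ltrDl.
have := ge0 (- (p * e)).
have -> : - (p * e) * p + (- (p * e)) ^+ 2 * q = p ^+ 2 * e * (e * q - 1) by ring.
have p2e_gt0 : 0 < p ^+ 2 * e by rewrite mulr_gt0 // lt_def sqrf_eq0 p0 sqr_ge0.
by rewrite pmulr_rge0 // subr_ge0 leNgt eq_lt1.
Qed.

Lemma psdmx_qform_eq0 A c : A^T = A -> psdmx A -> qform A c = 0 -> A *m c = 0.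
Proof.
move=> sA psdA qc0.
have cross y : vdot y (A *m c) = 0.
  suff /eqP : 2 * vdot y (A *m c) = 0 by rewrite mulf_eq0 pnatr_eq0 => /eqP.
  apply: (@quadratic_ge0_lincoef_eq0 _ (qform A y)) => s.
  have := psdA (c + s *: y).
  rewrite qformD qc0 qformZ -scalemxAr vdotZr vdotZl (vdot_sym c y sA).
  by congr (0 <= _); ring.
by apply: sqnorm_eq0; exact: cross.
Qed.

End Semidefinite.

Section QuadraticRoot.
Variables (R : rcfType) (n : nat).

Lemma quadratic_root_ge0 (p q d : R) : 0 < q -> 0 <= d ->
  exists2 s, 0 <= s & s * p + s ^+ 2 * q = d.
Proof.
move=> q_gt0 d_ge0.
have disc_ge0 : 0 <= p ^+ 2 + 4 * q * d by rewrite addr_ge0 ?sqr_ge0 // !mulr_ge0 // ltW.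
pose r := Num.sqrt (p ^+ 2 + 4 * q * d).
have r2 : r ^+ 2 = p ^+ 2 + 4 * q * d by rewrite sqr_sqrtr.
have p_le_r : p <= r.
  apply: le_trans (ler_norm p) _; rewrite -sqrtr_sqr; apply: ler_wsqrtr.
  by rewrite lerDl !mulr_ge0 // ltW.
exists ((r - p) / (2 * q)); first by rewrite divr_ge0 ?subr_ge0 // mulr_ge0 // ltW.
have q0 : q != 0 by rewrite gt_eqF.
have -> : (r - p) / (2 * q) * p + ((r - p) / (2 * q)) ^+ 2 * q = (r ^+ 2 - p ^+ 2) / (4 * q).
  by field.
by rewrite r2; field.
Qed.

Lemma sqnorm_shift_reach (y v : 'cV[R]_n) (r : R) : v != 0 -> sqnorm y <= r ->
  exists2 s, 0 <= s & sqnorm (y + s *: v) = r.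
Proof.
move=> v0 yr.
have v_gt0 := sqnorm_gt0 v0.
have gap_ge0 : 0 <= r - sqnorm y by rewrite subr_ge0.
have [s s0 hs] := quadratic_root_ge0 (2 * vdot y v) v_gt0 gap_ge0.
by exists s => //; rewrite sqnormD_scale -addrA hs addrC subrK.
Qed.

End QuadraticRoot.

Section Rayleigh.
Variables (R : realType) (n : nat).
Implicit Types (A : 'M[R]_n) (x : 'cV[R]_n).
Local Open Scope classical_set_scope.

Lemma qform_trmx_continuous A : continuous (fun y : 'rV[R]_n => qform A y^T).
Proof.
have coord i : continuous (fun y : 'rV[R]_n => y^T i 0).
  rewrite (_ : (fun y : 'rV[R]_n => _) = fun y : 'rV[R]_n => y 0 i).
    exact: coord_continuous.
  by apply: funext => y; rewrite mxE.
rewrite (_ : (fun y : 'rV[R]_n => _) =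
             fun y : 'rV[R]_n => \sum_i \sum_j y^T i 0 * A i j * y^T j 0).
  apply: continuous_big => [|i _]; first exact: add_continuous.
  apply: continuous_big => [|j _]; first exact: add_continuous.
  have coefM : continuous (fun y : 'rV[R]_n => y^T i 0 * A i j).
    by move=> y; exact: (continuousM (coord i y) (@cst_continuous _ _ (A i j) y)).
  by move=> y; exact: (continuousM (coefM y) (coord j y)).
by apply: funext => y; rewrite qformE.
Qed.

Lemma unit_sphere_compact : compact [set y : 'rV[R]_n | sqnorm y^T = 1].
Proof.
apply: bounded_closed_compact.
  exists 1; split => // M M_gt1 y /= y1.
  change (mx_norm y <= M); rewrite mx_normrE; apply: bigmax_le => [|[i j] _ /=].
    exact: ltW (lt_trans ltr01 M_gt1).
  rewrite ord1; apply: ltW (le_lt_trans _ M_gt1).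
  rewrite -(expr_le1 (_ : 0 < 2)%N) // -y1 sqnormE real_normK ?num_real //.
  rewrite (bigD1 j) //= mxE lerDl.
  by rewrite sumr_ge0 // => k _; rewrite sqr_ge0.
rewrite (_ : [set y | _] = (fun y : 'rV[R]_n => qform 1%:M y^T) @^-1` [set r | r = 1]).
  apply: preimage_closed; last exact: closed_eq.
  by move=> y _; exact: qform_trmx_continuous.
by apply: funext => y /=; rewrite qform1.
Qed.

Lemma psdmx_min_on_sphere A (c : 'rV[R]_n) : sqnorm c^T = 1 ->
    (forall y : 'rV[R]_n, sqnorm y^T = 1 -> qform A c^T <= qform A y^T) ->
  psdmx (A - (qform A c^T)%:M).
Proof.
move=> c1 cmin x; rewrite qform_sub_scalar subr_ge0.
have [->|/sqnorm_gt0 x_gt0] := eqVneq x 0; first by rewrite qform0 sqnorm0 mulr0.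
pose s := Num.sqrt (sqnorm x).
have s2 : s ^+ 2 = sqnorm x by rewrite sqr_sqrtr // ltW.
have := cmin (s^-1 *: x)^T.
rewrite trmxK sqnormZ qformZ exprVn s2 mulVf ?gt_eqF //.
by move=> /(_ erefl); rewrite mulrC ler_pdivlMr.
Qed.

Lemma symmetric_eigenvalue_psd A : A^T = A -> (0 < n)%N ->
  exists mu, eigenvalue A mu /\ psdmx (A - mu%:M).
Proof.
move=> sA n_gt0; pose i0 := Ordinal n_gt0.
have sphere0 : [set y : 'rV[R]_n | sqnorm y^T = 1] !=set0.
  exists (delta_mx 0 i0) => /=; rewrite sqnormE (bigD1 i0) //= big1 => [|j /negbTE ji0].
    by rewrite !mxE !eqxx expr1n addr0.
  by rewrite !mxE ji0 andbF expr0n.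
have [c /set_mem c1 cmin] := compact_EVT_min sphere0 unit_sphere_compact
  (continuous_subspaceT (@qform_trmx_continuous A)).
set mu := qform A c^T.
have psd : psdmx (A - mu%:M).
  by apply: psdmx_min_on_sphere => // y y1; exact/cmin/mem_set.
exists mu; split => //.
have /eqP : (A - mu%:M) *m c^T = 0.
  apply: psdmx_qform_eq0 => //; first by rewrite linearB /= tr_scalar_mx sA.
  by rewrite qform_sub_scalar c1 mulr1 subrr.
rewrite mulmxBl mul_scalar_mx subr_eq0 => /eqP Ac.
apply/eigenvalueP; exists c.
  have -> : c *m A = (A *m c^T)^T by rewrite trmx_mul trmxK sA.
  by rewrite Ac linearZ /= trmxK.
by apply: contra_eq_neq c1 => ->; rewrite trmx0 sqnorm0 eq_sym oner_neq0.
Qed.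

Lemma smallest_eigenvalue_psd A lam :
  A^T = A -> smallest_eigenvalue A lam -> psdmx (A - lam%:M).
Proof.
move=> sA [_ lam_min] x; have [n0|n_gt0] := posnP n.
  suff -> : x = 0 by rewrite qform0.
  by apply/matrixP => i j; move: (leq_trans (ltn_ord i) (eq_leq n0)).
have [mu [eig_mu psd_mu]] := symmetric_eigenvalue_psd sA n_gt0.
have -> : qform (A - lam%:M) x = qform (A - mu%:M) x + (mu - lam) * sqnorm x.
  by rewrite !qform_sub_scalar; ring.
by rewrite addr_ge0 // mulr_ge0 ?sqnorm_ge0 // subr_ge0 lam_min.
Qed.

End Rayleigh.

Section ValueSet.
Variables (R : realType) (n k : nat) (A : 'M[R]_n) (lam : R) (a x0 : 'cV[R]_n).
Variables (alpha : R) (b : 'I_k -> 'cV[R]_n) (beta : 'I_k -> R).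
Implicit Types (w x : 'cV[R]_n).

Lemma qobjE x : qobj A a x = qform A x + vdot a x.
Proof. by rewrite /qobj /qform /vdot mulmxA. Qed.

Lemma ballconE x : ballcon x0 alpha x = sqnorm (x - x0) - alpha.
Proof. by rewrite /ballcon sqnormE. Qed.

Lemma linconE (c : 'cV[R]_n) gamma x : lincon c gamma x = vdot c x - gamma.
Proof. by []. Qed.

Lemma qobj_shifted x : qobj A a x = qform (A - lam%:M) x +
  vdot (a + (2 * lam) *: x0) x + lam * sqnorm (x - x0) - lam * sqnorm x0.
Proof. by rewrite qobjE qform_sub_scalar vdotDl vdotZl sqnormB (vdotC x0); ring. Qed.

Variable v : 'cV[R]_n.
Hypotheses (sA : A^T = A) (psdA : psdmx (A - lam%:M)) (Av : A *m v = lam *: v).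
Hypotheses (v0 : v != 0) (cv : vdot (a + (2 * lam) *: x0) v <= 0).
Hypothesis bv : forall i, vdot (b i) v = 0.

Lemma value_vec_convex_comb x w t : 0 <= t <= 1 ->
  exists u, forall i, value_vec A a x0 alpha b beta u 0 i <=
    t * value_vec A a x0 alpha b beta x 0 i + (1 - t) * value_vec A a x0 alpha b beta w 0 i.
Proof.
move=> t01; pose u0 := t *: x + (1 - t) *: w.
pose c := a + (2 * lam) *: x0.
have u0_x0 : u0 - x0 = t *: (x - x0) + (1 - t) *: (w - x0).
  by apply/matrixP => i j; rewrite !mxE; ring.
have [s s0 hs] : exists2 s, 0 <= s &
    sqnorm (u0 - x0 + s *: v) = t * sqnorm (x - x0) + (1 - t) * sqnorm (w - x0).
  apply: sqnorm_shift_reach => //.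
  rewrite u0_x0 -!qform1; apply: psdmx_qform_convex => // y.
  by rewrite qform1 sqnorm_ge0.
rewrite -addrAC in hs; exists (u0 + s *: v).
have ker : (A - lam%:M) *m v = 0 by rewrite mulmxBl mul_scalar_mx Av subrr.
have sym : (A - lam%:M)^T = A - lam%:M by rewrite linearB /= tr_scalar_mx sA.
have lin_u0 y : vdot y u0 = t * vdot y x + (1 - t) * vdot y w.
  by rewrite vdotDr !vdotZr.
have g_convex : qform (A - lam%:M) (u0 + s *: v) + vdot c (u0 + s *: v) <=
    t * (qform (A - lam%:M) x + vdot c x) + (1 - t) * (qform (A - lam%:M) w + vdot c w).
  rewrite qform_add_ker //; last by rewrite -scalemxAr ker scaler0.
  rewrite vdotDr vdotZr lin_u0.
  have := psdmx_qform_convex x w psdA t01.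
  have : s * vdot c v <= 0 by rewrite mulr_ge0_le0.
  lra.
move=> i; rewrite !mxE; case: (split i) => [j|j]; first case: ifP => _.
- rewrite !qobj_shifted hs -/c; lra.
- by rewrite !ballconE hs; lra.
- by rewrite !linconE vdotDr vdotZr bv mulr0 addr0 lin_u0; lra.
Qed.

Lemma Uset_convex : convex_set (Uset A a x0 alpha b beta).
Proof.
move=> y z [x hx] [w hw] t t0 t1.
have [u hu] := value_vec_convex_comb x w (introT andP (conj t0 t1)).
exists u => i; apply: le_trans (hu i) _; rewrite ![in leRHS]mxE.
by apply: lerD; apply: ler_wpM2l; rewrite ?subr_ge0 ?hx ?hw.
Qed.

End ValueSet.

Theorem proposition3p3 (R : realType) (n k : nat) (A : 'M[R]_n) (lam : R)
  (a x0 : 'cV[R]_n) (alpha : R) (b : 'I_k -> 'cV[R]_n) (beta : 'I_k -> R) :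
  A^T = A ->
  smallest_eigenvalue A lam ->
  0 < alpha ->
  (exists v : 'cV[R]_n, v != 0 /\ A *m v - lam *: v = 0 /\
     (forall i : 'I_k, (b i)^T *m v = 0)) ->
  (exists v : 'cV[R]_n, v != 0 /\ A *m v - lam *: v = 0 /\
     ((a + (2 * lam) *: x0)^T *m v) 0 0 <= 0 /\
     (forall i : 'I_k, ((b i)^T *m v) 0 0 <= 0)) /\
  convex_set (Uset A a x0 alpha b beta).
Proof.
move=> sA lam_min _ [v [v0 [Av bv]]].
have {}Av : A *m v = lam *: v by apply/eqP; rewrite -subr_eq0 Av.
have bv0 i : vdot (b i) v = 0 by rewrite /vdot bv mxE.
pose c := a + (2 * lam) *: x0.
have [v' [v'0 Av' cv' bv']] : exists v', [/\ v' != 0, A *m v' = lam *: v',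
    vdot c v' <= 0 & forall i, vdot (b i) v' = 0].
  have [cv|cv] := lerP (vdot c v) 0; first by exists v.
  exists (- v); rewrite oppr_eq0 mulmxN Av scalerN vdotNr oppr_le0 ltW //.
  by split=> // i; rewrite vdotNr bv0 oppr0.
split.
  exists v'; split=> //; split; first by rewrite Av' subrr.
  by split=> // i; rewrite -/(vdot _ _) bv'.
exact: Uset_convex (smallest_eigenvalue_psd sA lam_min) Av' v'0 cv' bv'.
Qed.
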